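(* Let $A=(a_{ij})_{i,j\in\mathbb{N}}\in\{0,1\}^{\mathbb{N}\times\mathbb{N}}$ be a binary matrix in which the row and column upper/lower asymptotic densities are separated, i.e., there exist reals $0\le\alpha<\beta\le1$ with $\bar d(\mathbf{r}^{(i)})\le\alpha$ and $\underline d(\mathbf{c}^{(j)})\ge\beta$ for all $i,j\in\mathbb{N}$. Then $A$ contains a fully lower-triangular submatrix.
   Context: For $\mathbf{a}=(a_k)_{k\in\mathbb{N}}\in\{0,1\}^{\mathbb{N}}$, $\bar d(\mathbf{a})=\limsup_{n\to\infty}\frac1n\sum_{k=1}^na_k$ and $\underline d(\mathbf{a})=\liminf_{n\to\infty}\frac1n\sum_{k=1}^na_k$. The $i$-th row of $A$ is $\mathbf{r}^{(i)}=(a_{ij})_{j\in\mathbb{N}}$ and the $j$-th column is $\mathbf{c}^{(j)}=(a_{ij})_{i\in\mathbb{N}}$. $A$ contains a fully lower-triangular submatrix if there exist sequences of distinct row indices $i_1,i_2,\ldots$ and distinct column indices $j_1,j_2,\ldots$ such that $a_{i_kj_l}=1\iff k\ge l$. *)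

From mathcomp Require Import all_boot all_order all_algebra.
From mathcomp Require Import all_classical all_reals all_analysis.
Set Implicit Arguments. Unset Strict Implicit. Unset Printing Implicit Defensive.
Import Order.TTheory GRing.Theory Num.Theory.
Local Open Scope ring_scope.

(* Sequences indexed by nat = {0,1,2,...}; index k corresponds to the paper's k+1. *)
Definition avg {R : realType} (a : nat -> bool) : nat -> R :=
  fun n => (\sum_(k < n.+1) (a k : nat))%:R / n.+1%:R.

Definition upper_density {R : realType} (a : nat -> bool) : R := limn_sup (avg a).
Definition lower_density {R : realType} (a : nat -> bool) : R := limn_inf (avg a).

Definition rowseq (A : nat -> nat -> bool) (i : nat) : nat -> bool := fun j => A i j.
Definition colseq (A : nat -> nat -> bool) (j : nat) : nat -> bool := fun i => A i j.

Definition has_fully_lower_triangular (A : nat -> nat -> bool) : Prop :=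
  exists (r c : nat -> nat), injective r /\ injective c /\
    forall k l : nat, A (r k) (c l) = (l <= k)%N.

(* Fix a nonprincipal ultrafilter U on nat; the U-limit [udens] of the counting
   densities is a finitely additive density.  The key lemma is a variant of
   Bergelson's intersectivity lemma: if every set E n has density at least del
   along U and del' < del, there is a set om of upper density at least del' such
   that, for every L, infinitely many m have the pattern (E 0 m, ..., E (L-1) m)
   equal to (om 0, ..., om (L-1)).

   Applied to the complements of the rows (density > 1 - alpha), it yields a set
   om of rows of positive upper density and columns col m avoiding every row of
   om below m.  Applied again, along an ultrafilter concentrated on the scales
   where om is dense, to the sets {i in om | A i (col m)}, whose density there
   is positive because that of om plus that of the columns exceeds 1, it yields
   an infinite set om' of indices and rows row q in om meeting col m for all
   m <= q in om'.  Picking q 0 < q 1 < ... in om' with row (q k) < q (k + 1),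
   the rows row (q k) and the columns col (q l) form the fully lower-triangular submatrix. *)

From mathcomp Require Import all_boot all_order all_algebra.
From mathcomp Require Import all_classical all_reals all_analysis.
From mathcomp Require Import ring lra.
Import Order.TTheory GRing.Theory Num.Theory numFieldNormedType.Exports.
Local Open Scope ring_scope.
Local Open Scope classical_set_scope.

Section limn_sup_inf.
Context {R : realType}.
Implicit Types (u : R^nat) (g : R).

Lemma limn_sup_lt_near u g : bounded_fun u -> limn_sup u < g ->
  \forall n \near \oo, u n < g.
Proof.
move=> bu; rewrite limn_supE // => ug.
have [ubu lbu] := (bounded_fun_has_ubound bu, bounded_fun_has_lbound bu).
near=> n; apply: le_lt_trans (_ : sups u n < g).
  by apply: ub_le_sup; [exact: has_ubound_sdrop | exists n => /=].
by near: n; apply: cvgr_lt ug; exact: cvg_sups_inf.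
Unshelve. all: end_near. Qed.

Lemma limn_inf_gt_near u g : bounded_fun u -> g < limn_inf u ->
  \forall n \near \oo, g < u n.
Proof.
move=> bu; rewrite limn_infE // => gu.
have [ubu lbu] := (bounded_fun_has_ubound bu, bounded_fun_has_lbound bu).
near=> n; apply: lt_le_trans (_ : g < infs u n) _.
  by near: n; apply: cvgr_gt gu; exact: cvg_infs_sup.
by apply: ge_inf; [exact: has_lbound_sdrop | exists n => /=].
Unshelve. all: end_near. Qed.

End limn_sup_inf.

Definition cnt (S : nat -> bool) (M : nat) : nat := count S (iota 0 M).
Definition dens {R : realType} (S : nat -> bool) (M : nat) : R := (cnt S M)%:R / M%:R.

Definition infinitely_often (S : nat -> bool) : Prop :=
  forall b, exists2 m, (b <= m)%N & S m.

Definition often_dense {R : realType} (d : R) (S : nat -> bool) : Prop :=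
  forall b, exists2 K, (b <= K)%N & d * K%:R <= (cnt S K)%:R.

Lemma cnt_sum S M : cnt S M = (\sum_(k < M) S k)%N.
Proof.
rewrite /cnt -sum1_count big_mkcond -(big_mkord xpredT (fun k => nat_of_bool (S k))).
by rewrite /index_iota subn0; apply: eq_bigr => k _; case: (S k).
Qed.

Lemma cnt_le S M : (cnt S M <= M)%N.
Proof. by rewrite /cnt -[X in (_ <= X)%N](size_iota 0 M) count_size. Qed.

Lemma cnt_le_bound S b M : (forall m, (b <= m)%N -> ~~ S m) -> (cnt S M <= b)%N.
Proof.
move=> Sb; have [Mb|bM] := leqP M b; first exact: leq_trans (cnt_le S M) Mb.
rewrite /cnt -(subnKC (ltnW bM)) iotaD count_cat add0n.
rewrite [count S (iota b _)](@eq_in_count _ _ pred0) ?count_pred0 ?addn0.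
  by rewrite -[X in (_ <= X)%N](size_iota 0 b) count_size.
by move=> m; rewrite mem_iota => /andP[bm _]; apply/negbTE/Sb.
Qed.

Section density.
Context {R : realType}.
Implicit Types (S T : nat -> bool) (d : R).

Lemma avg_dens S n : avg S n = dens S n.+1 :> R.
Proof. by rewrite /avg /dens cnt_sum. Qed.

Lemma dens_ge0 S M : 0 <= dens S M :> R.
Proof. by rewrite /dens divr_ge0. Qed.

Lemma dens_le1 S M : dens S M <= 1 :> R.
Proof.
rewrite /dens; case: M => [|M]; first by rewrite invr0 mulr0.
by rewrite ler_pdivrMr ?ltr0Sn // mul1r ler_nat cnt_le.
Qed.

Lemma dens_norm_le1 S M : `|dens S M| <= 1 :> R.
Proof. by rewrite ger0_norm ?dens_ge0 ?dens_le1. Qed.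

Lemma dens_predC S M : (0 < M)%N -> dens (predC S) M = 1 - dens S M :> R.
Proof.
move=> M0; have : (M%:R : R) != 0 by rewrite pnatr_eq0 -lt0n.
rewrite /dens; have -> : M%:R = (cnt S M)%:R + (cnt (predC S) M)%:R :> R.
  by rewrite -natrD /cnt count_predC size_iota.
by move=> M0'; field.
Qed.

Lemma dens_predI_ge S T M : (0 < M)%N ->
  dens S M + dens T M - 1 <= dens (predI S T) M :> R.
Proof.
move=> M0; have M0' : (0 < M%:R :> R) by rewrite ltr0n.
have UI : (cnt S M)%:R + (cnt T M)%:R =
          (cnt (predU S T) M)%:R + (cnt (predI S T) M)%:R :> R.
  by rewrite -!natrD /cnt count_predUI.
have U_le : (cnt (predU S T) M)%:R <= M%:R :> R by rewrite ler_nat cnt_le.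
rewrite /dens; have -> : (cnt S M)%:R / M%:R + (cnt T M)%:R / M%:R - 1 =
    ((cnt S M)%:R + (cnt T M)%:R - M%:R) / M%:R :> R by field; rewrite gt_eqF.
rewrite ler_pM2r ?invr_gt0 //; lra.
Qed.

Lemma bounded_avg S : bounded_fun (@avg R S).
Proof.
rewrite /bounded_near; near=> M => n _ /=; rewrite avg_dens.
apply: le_trans (dens_norm_le1 _ _) _; near: M; exact: nbhs_pinfty_ge.
Unshelve. all: end_near. Qed.

Lemma upper_density_lt_near S g : upper_density S < g ->
  \forall M \near \oo, dens S M < g :> R.
Proof.
move=> /(limn_sup_lt_near _ _ (bounded_avg S)) [N _ hN].
exists N.+1 => // -[//|M] /= NM; rewrite -avg_dens; exact: hN.
Qed.

Lemma lower_density_gt_near S g : g < lower_density S ->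
  \forall M \near \oo, g < dens S M :> R.
Proof.
move=> /(limn_inf_gt_near _ _ (bounded_avg S)) [N _ hN].
exists N.+1 => // -[//|M] /= NM; rewrite -avg_dens; exact: hN.
Qed.

Lemma often_dense_infinitely_often d S : 0 < d -> often_dense d S -> infinitely_often S.
Proof.
move=> d0 dS b; apply: contrapT => noS.
have Sb m : (b <= m)%N -> ~~ S m by move=> bm; apply/negP => Sm; apply: noS; exists m.
have [K bK dK] := dS (Num.Def.archi_bound (b%:R / d)).
have := archi_boundP (divr_ge0 (ler0n R b) (ltW d0)); rewrite ltr_pdivrMr // => b_lt.
have : (Num.Def.archi_bound (b%:R / d))%:R * d <= K%:R * d.
  by apply: ler_wpM2r; [exact: ltW | rewrite ler_nat].
have : (cnt S K)%:R <= b%:R :> R by rewrite ler_nat cnt_le_bound.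
rewrite mulrC in dK; lra.
Qed.

End density.

Section ultrafilter_density.
Context {R : realType} {U : set_system nat} {U_ultra : UltraFilter U}.
Hypothesis U_cofinite : \oo `<=` U.
Implicit Types (S T : nat -> bool).

Lemma ultra_cvg (u : nat -> R) (b : R) : (forall n, `|u n| <= b) -> cvg (u @ U).
Proof.
move=> ub; have Uub : U (u @^-1` `[- b, b]).
  by apply: filterE => n; rewrite /= in_itv /= -ler_norml.
have [p [_ clp]] := @segment_compact R (- b) b (u @ U) _ Uub.
apply: (cvgP p) => V pV; have [//|UnV] := in_ultra_setVsetC (u @^-1` V) U_ultra.
by have [x [nVx Vx]] := clp (~` V) V UnV pV.
Qed.

Definition udens S : R := lim (@dens R S @ U).

Lemma cvg_dens S : cvg (@dens R S @ U).
Proof. by apply: ultra_cvg; exact: dens_norm_le1. Qed.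

Lemma udens_ge x S : (\forall M \near U, x <= dens S M) -> x <= udens S.
Proof. exact: limr_ge (cvg_dens S). Qed.

Lemma udens_le x S : (\forall M \near U, dens S M <= x) -> udens S <= x.
Proof. exact: limr_le (cvg_dens S). Qed.

Lemma udens_ge0 S : 0 <= udens S.
Proof. by apply: udens_ge; apply: filterE => M; exact: dens_ge0. Qed.

Lemma udens_le1 S : udens S <= 1.
Proof. by apply: udens_le; apply: filterE => M; exact: dens_le1. Qed.

Lemma le_udens S T : subpred S T -> udens S <= udens T.
Proof.
move=> ST; apply: ler_lim (cvg_dens S) (cvg_dens T) _; apply: filterE => M.
by rewrite /dens ler_wpM2r // ler_nat; exact: sub_count.
Qed.

Lemma eq_udens S T : S =1 T -> udens S = udens T.
Proof. by move=> /funext ->. Qed.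

Lemma udens_pred0 : udens pred0 = 0.
Proof.
apply/le_anti; rewrite udens_ge0 andbT; apply: udens_le; apply: filterE => M.
by rewrite /dens /cnt count_pred0 mul0r.
Qed.

Lemma udensUI S T : udens (predU S T) + udens (predI S T) = udens S + udens T.
Proof.
have DUI : @dens R (predU S T) + dens (predI S T) = dens S + dens T.
  by apply: funext => M; rewrite !fctE /dens -!mulrDl -!natrD /cnt count_predUI.
have UI : dens S + dens T @ U --> udens (predU S T) + udens (predI S T).
  by rewrite -DUI; exact: cvgD (cvg_dens _) (cvg_dens _).
rewrite -(cvg_lim _ UI) //; apply: cvg_lim => //; exact: cvgD (cvg_dens _) (cvg_dens _).
Qed.

Lemma udens_predU_le S T : udens (predU S T) <= udens S + udens T.
Proof. by rewrite -udensUI lerDl udens_ge0. Qed.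

Lemma udens_predD S T : subpred S T -> udens (predD T S) = udens T - udens S.
Proof.
move=> ST; have -> : udens T = udens S + udens (predD T S).
  rewrite -udensUI (@eq_udens (predI _ _) pred0) ?udens_pred0 ?addr0.
    by apply: eq_udens => k /=; case Sk: (S k) => //=; exact: ST.
  by move=> k /=; case: (S k).
by rewrite addrC addKr.
Qed.

Lemma udens_gt0_infinitely_often S : 0 < udens S -> infinitely_often S.
Proof.
move=> S0 b; apply: contrapT => noS.
have Sb m : (b <= m)%N -> ~~ S m by move=> bm; apply/negP => Sm; apply: noS; exists m.
suff : udens S <= 0 by rewrite leNgt S0.
apply/ler_addgt0Pr => e e0; rewrite add0r; apply: udens_le; apply: U_cofinite.
exists (Num.Def.archi_bound (b%:R / e)).+1 => // M /= bM.
have M0 : (0 < M%:R :> R) by rewrite ltr0n (leq_trans _ bM).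
rewrite /dens ler_pdivrMr //; apply: le_trans (_ : b%:R <= _).
  by rewrite ler_nat cnt_le_bound.
have be : 0 <= b%:R / e by rewrite divr_ge0 // ltW.
rewrite -ler_pdivrMl // mulrC; apply/ltW/(lt_le_trans (archi_boundP be)).
by rewrite ler_nat ltnW.
Qed.

End ultrafilter_density.

Arguments udens {R} U.

(* Reading E n m as "m belongs to the n-th set", cylinder E p L is the set of
   the m whose membership pattern in E 0, ..., E (L-1) is p 0, ..., p (L-1). *)
Definition cylinder (E : nat -> nat -> bool) (p : nat -> bool) (L m : nat) : bool :=
  [forall n : 'I_L, E n m == p n].

Definition upd (p : nat -> bool) L b n : bool := if n == L then b else p n.

Lemma cylinder_upd E p L b m :
  cylinder E (upd p L b) L.+1 m = cylinder E p L m && (E L m == b).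
Proof.
apply/forallP/andP => [cyl_m|[/forallP cyl_m /eqP ELm] n].
  split; last by have := cyl_m ord_max; rewrite /upd eqxx.
  apply/forallP => n; have := cyl_m (widen_ord (leqnSn L) n).
  by rewrite /upd /= ltn_eqF.
rewrite /upd; case: (eqVneq (n : nat) L) => [-> | nL]; first by rewrite ELm.
have n_lt : (n < L)%N by rewrite ltn_neqAle nL -ltnS ltn_ord.
exact: (cyl_m (Ordinal n_lt)).
Qed.

Lemma eq_cylinder E p q L m : {in gtn L, p =1 q} -> cylinder E p L m = cylinder E q L m.
Proof. by move=> pq; apply: eq_forallb => n; rewrite pq // inE. Qed.

Section intersectivity.
Context {R : realType} (U : set_system nat) {U_ultra : UltraFilter U}.
Hypothesis U_cofinite : \oo `<=` U.
Variables (E : nat -> nat -> bool) (del del' : R).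
Hypotheses (del'_ge0 : 0 <= del') (del'_lt_del : del' < del).
Hypothesis E_dense : forall n, \forall M \near U, del <= dens (E n) M.

Definition heavy K m : bool := del' * K%:R <= (cnt (E^~ m) K)%:R.

Lemma udens_heavy K : (0 < K)%N -> del - del' <= udens U (heavy K).
Proof.
move=> K0; apply: udens_ge; near=> M.
have M0 : 0 < M%:R :> R.
  by rewrite ltr0n; near: M; apply: U_cofinite; exact: nbhs_infty_gt.
have K0' : 0 < K%:R :> R by rewrite ltr0n.
have dense_rows : forall n : 'I_K, del <= dens (E n) M.
  by near: M; apply: filter_forall => n; exact: E_dense.
have double_count : \sum_(n < K) (cnt (E n) M)%:R = \sum_(m < M) (cnt (E^~ m) K)%:R :> R.
  rewrite -!natr_sum; congr _%:R.
  under eq_bigr do rewrite cnt_sum; under [RHS]eq_bigr do rewrite cnt_sum.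
  exact: exchange_big.
have rows_ge : K%:R * (del * M%:R) <= \sum_(n < K) (cnt (E n) M)%:R.
  apply: le_trans (_ : \sum_(n < K) (del * M%:R) <= _).
    by rewrite sumr_const card_ord mulr_natl.
  by apply: ler_sum => n _; rewrite -ler_pdivlMr //; exact: dense_rows.
have cols_le : \sum_(m < M) (cnt (E^~ m) K)%:R <=
    \sum_(m < M) (K%:R * (heavy K m)%:R + del' * K%:R) :> R.
  apply: ler_sum => m _; case: (boolP (heavy K m)) => [_|]; last first.
    by rewrite mulr0 add0r -ltNge => /ltW.
  rewrite mulr1 -[X in X <= _]addr0 lerD ?mulr_ge0 ?ler0n // ler_nat; exact: cnt_le.
have cols_eq : \sum_(m < M) (K%:R * (heavy K m)%:R + del' * K%:R) =
    K%:R * ((cnt (heavy K) M)%:R + del' * M%:R) :> R.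
  rewrite big_split /= -mulr_sumr sumr_const card_ord cnt_sum natr_sum -mulr_natr.
  ring.
have : K%:R * (del * M%:R) <= K%:R * ((cnt (heavy K) M)%:R + del' * M%:R).
  by apply: le_trans rows_ge _; rewrite double_count -cols_eq.
by rewrite ler_pM2l // /dens ler_pdivlMr // mulrBl; lra.
Unshelve. all: end_near. Qed.

Definition heavy_within j L m : bool := [exists K : 'I_L.+1, (j <= K)%N && heavy K m].

Lemma heavy_withinWr {j L L' m} : (L <= L')%N -> heavy_within j L m -> heavy_within j L' m.
Proof.
rewrite -ltnS => LL' /existsP[K /andP[jK hK]]; apply/existsP.
by exists (widen_ord LL' K); rewrite jK.
Qed.

Lemma heavy_withinWl {i j L m} : (i <= j)%N -> heavy_within j L m -> heavy_within i L m.
Proof.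
move=> ij /existsP[K /andP[jK hK]]; apply/existsP; exists K.
by rewrite hK (leq_trans ij jK).
Qed.

Lemma heavy_withinP {j K L m} : (j <= K <= L)%N -> heavy K m -> heavy_within j L m.
Proof.
by case/andP=> jK KL hK; apply/existsP; exists (Ordinal (KL : (K < L.+1)%N)); rewrite /= jK.
Qed.

Definition sup_heavy j : R := sup [set udens U (heavy_within j L) | L in [set: nat]].

Lemma has_sup_heavy j : has_sup [set (udens U (heavy_within j L) : R) | L in [set: nat]].
Proof.
split; first by exists (udens U (heavy_within j 0)), 0%N.
by exists 1 => _ [L _ <-]; exact: udens_le1.
Qed.

Lemma udens_heavy_within_le j L : udens U (heavy_within j L) <= sup_heavy j.
Proof. by apply: sup_upper_bound (has_sup_heavy j) _ _; exists L. Qed.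

Definition eps j : R := (del - del') / 2 ^+ j.+2.

Lemma eps_gt0 j : 0 < eps j.
Proof. by rewrite divr_gt0 ?exprn_gt0 // subr_gt0. Qed.

Lemma epsS j : eps j = 2 * eps j.+1.
Proof. by rewrite /eps (exprS _ j.+2); field; rewrite expf_neq0 // pnatr_eq0. Qed.

Lemma near_sup_heavy j : exists L, sup_heavy j - eps j < udens U (heavy_within j L).
Proof. by have [_ [L _ <-] ?] := sup_adherent (eps_gt0 j) (has_sup_heavy j); exists L. Qed.

Fixpoint horizon j : nat :=
  let L := maxn (xchoose (near_sup_heavy j)) j.+1 in
  if j is j'.+1 then maxn (horizon j') L else L.

Lemma horizon_gt j : (j < horizon j)%N.
Proof. by case: j => [|j] /=; rewrite !leq_max leqnn !orbT. Qed.

Lemma horizon_mono : {homo horizon : i j / (i <= j)%N}.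
Proof.
apply: (@homo_leq _ horizon (fun a b => (a <= b)%N)) => [//|m n p|n].
  exact: leq_trans.
by rewrite /= leq_maxl.
Qed.

Lemma udens_heavy_within_horizon j : sup_heavy j - eps j < udens U (heavy_within j (horizon j)).
Proof.
apply: lt_le_trans (xchooseP (near_sup_heavy j)) _; apply: le_udens => m.
by apply: heavy_withinWr; case: j => [|j] /=; rewrite !leq_max leqnn ?orbT.
Qed.

Lemma udens_heavy_within_horizon_ge j : del - del' <= udens U (heavy_within j (horizon j)).
Proof.
apply: le_trans (@udens_heavy j.+1 (ltn0Sn j)) _; apply: le_udens => m.
by apply: heavy_withinP; rewrite leqnSn horizon_gt.
Qed.

(* udens is only finitely additive, so the density of "heavy at some K >= j"
   is out of reach; horizon j truncates K at a finite stage losing at most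
   eps j, and the errors sum to at most (del - del') / 2. *)
Definition core j m : bool := [forall i : 'I_j.+1, heavy_within i (horizon i) m].

Lemma core_anti {i j m} : (i <= j)%N -> core j m -> core i m.
Proof.
rewrite -ltnS => ij /forallP core_m; apply/forallP => k.
exact: (core_m (widen_ord ij k)).
Qed.

Lemma core_heavy_within {j m} : core j m -> heavy_within j (horizon j) m.
Proof. by move/forallP/(_ ord_max). Qed.

Lemma coreS j m : core j.+1 m = core j m && heavy_within j.+1 (horizon j.+1) m.
Proof.
apply/idP/andP => [core_m|[/forallP core_m hw]].
  by split; [exact: core_anti (leqnSn j) core_m | exact: core_heavy_within].
apply/forallP => i; have := ltn_ord i; rewrite ltnS leq_eqVlt => /orP[/eqP-> //|ij].
exact: (core_m (Ordinal ij)).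
Qed.

Lemma udens_heavy_within_notcore {j L} : (horizon j <= L)%N ->
  udens U (predD (heavy_within j L) (core j)) <= (del - del') / 2 - eps j.
Proof.
elim: j L => [|j IH] L hL.
  have -> : udens U (predD (heavy_within 0 L) (core 0)) =
      udens U (predD (heavy_within 0 L) (heavy_within 0 (horizon 0))) :> R.
    apply: eq_udens => m /=; congr (~~ _ && _).
    apply/idP/idP => [/core_heavy_within //|hw].
    by apply/forallP => i; rewrite (ord1 i).
  rewrite udens_predD; last by move=> m; exact: heavy_withinWr.
  have := udens_heavy_within_horizon 0; have := udens_heavy_within_le 0 L.
  have -> : (del - del') / 2 - eps 0 = eps 0 by rewrite /eps expr2; field.
  lra.
apply: le_trans (_ : udens U (predU
    (predD (heavy_within j.+1 L) (heavy_within j.+1 (horizon j.+1)))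
    (predD (heavy_within j L) (core j))) <= _).
  apply: le_udens => m /= /andP[]; rewrite coreS negb_and => /orP[ncore|nhw] hw.
    by rewrite (heavy_withinWl (leqnSn j) hw) ncore orbT.
  by rewrite hw nhw.
apply: le_trans (udens_predU_le _ _) _.
rewrite udens_predD; last by move=> m; exact: heavy_withinWr.
have := IH L (leq_trans (horizon_mono _ _ (leqnSn j)) hL).
have := udens_heavy_within_horizon j.+1; have := udens_heavy_within_le j.+1 L.
have := epsS j; lra.
Qed.

Lemma udens_core j : (del - del') / 2 <= udens U (core j).
Proof.
have := udens_heavy_within_notcore (leqnn (horizon j)).
have := udens_heavy_within_horizon_ge j; have := eps_gt0 j.
have : udens U (heavy_within j (horizon j)) <=
    udens U (predD (heavy_within j (horizon j)) (core j)) + udens U (core j) :> R.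
  apply: le_trans _ (udens_predU_le _ _); apply: le_udens => m /= hw.
  by rewrite hw andbT; case: (core j m).
lra.
Qed.

Definition charged p L :=
  exists2 c : R, 0 < c & forall j, c <= udens U (predI (cylinder E p L) (core j)).

Lemma charged_upd {p L} :
  charged p L -> charged (upd p L true) L.+1 \/ charged (upd p L false) L.+1.
Proof.
move=> [c c0 c_le]; apply: contrapT => /not_orP[nt nf].
have small b : ~ charged (upd p L b) L.+1 ->
    exists j, udens U (predI (cylinder E (upd p L b) L.+1) (core j)) < c / 2.
  move=> nch; apply: contrapT => big; apply: nch; exists (c / 2) => [|j].
    by rewrite divr_gt0.
  by rewrite leNgt; apply/negP => lt; apply: big; exists j.
have [[j1 small1] [j2 small2]] := (small _ nt, small _ nf).
pose j := maxn j1 j2.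
have shrink b i : (i <= j)%N ->
    udens U (predI (cylinder E (upd p L b) L.+1) (core j)) <=
    udens U (predI (cylinder E (upd p L b) L.+1) (core i)) :> R.
  by move=> ij; apply: le_udens => m /andP[/= -> /(core_anti ij)].
have split_cyl : udens U (predI (cylinder E p L) (core j)) =
    udens U (predI (cylinder E (upd p L true) L.+1) (core j)) +
    udens U (predI (cylinder E (upd p L false) L.+1) (core j)) :> R.
  rewrite -udensUI [X in _ + X](_ : _ = 0) ?addr0.
    apply: eq_udens => m /=; rewrite !cylinder_upd.
    by case: (E L m); case: (cylinder E p L m); case: (core j m).
  rewrite -udens_pred0; apply: eq_udens => m /=; rewrite !cylinder_upd.
  by case: (E L m); rewrite ?andbF.
have := c_le j; rewrite split_cyl.
have := shrink true j1 (leq_maxl _ _); have := shrink false j2 (leq_maxr _ _).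
lra.
Qed.

Fixpoint prefix L : nat -> bool :=
  if L is L'.+1 then upd (prefix L') L' `[< charged (upd (prefix L') L' true) L'.+1 >]
  else fun=> false.

Lemma charged_prefix L : charged (prefix L) L.
Proof.
elim: L => [|L IH] /=.
  exists ((del - del') / 2) => [|j]; first by rewrite divr_gt0 // subr_gt0.
  apply: le_trans (udens_core j) _; apply: le_udens => m core_m.
  by rewrite /= core_m andbT; apply/forallP => -[].
by case: asboolP => // nt; case: (charged_upd IH).
Qed.

Definition omega n := prefix n.+1 n.

Lemma prefix_omega L n : (n < L)%N -> prefix L n = omega n.
Proof.
elim: L => [//|L IH]; rewrite ltnS leq_eqVlt => /orP[/eqP-> //|nL].
by rewrite /= /upd ltn_eqF // IH.
Qed.

Lemma charged_omega L : charged omega L.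
Proof.
have [c c0 c_le] := charged_prefix L; exists c => // j; apply: le_trans (c_le j) _.
by apply: le_udens => m /=; rewrite (@eq_cylinder _ (prefix L) omega) // => n; exact: prefix_omega.
Qed.

(* A point of core j is heavy at some K <= horizon j, so a point of the cylinder
   of omega of length horizon j inside core j shows that omega itself has
   density at least del' at the scale K >= j. *)
Lemma often_dense_omega : often_dense del' omega.
Proof.
move=> j; have [c c0 c_le] := charged_omega (horizon j).
have [m _ /andP[cyl_m core_m]] :=
  udens_gt0_infinitely_often U_cofinite _ (lt_le_trans c0 (c_le j)) 0.
have /existsP[K /andP[jK heavy_m]] := core_heavy_within core_m.
exists K => //; move: heavy_m; rewrite /heavy /cnt (@eq_in_count _ _ omega) // => n.
rewrite mem_iota => /andP[_ nK].
have n_lt : (n < horizon j)%N := leq_trans nK (ltn_ord K).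
by move/forallP: cyl_m => /(_ (Ordinal n_lt)) /eqP.
Qed.

Lemma infinitely_often_cylinder_omega L : infinitely_often (cylinder E omega L).
Proof.
have [c c0 c_le] := charged_omega L; apply: (@udens_gt0_infinitely_often R U _ U_cofinite).
by apply: lt_le_trans c0 (le_trans (c_le 0%N) _); apply: le_udens => m /andP[].
Qed.

End intersectivity.

Lemma ex_ultra_cofinite {V : nat -> bool} : infinitely_often V ->
  exists U : set_system nat, [/\ UltraFilter U, \oo `<=` U & U V].
Proof.
move=> V_inf.
pose F := [set S : set nat | exists N, forall n, (N <= n)%N -> V n -> S n].
have F_proper : ProperFilter F.
  apply: Build_ProperFilter_ex.
    by move=> S [N NS]; have [n Nn Vn] := V_inf N; exists n; exact: NS.
  split; first by exists 0%N.
    move=> S T [N NS] [N' N'T]; exists (maxn N N') => n; rewrite geq_max => /andP[Nn N'n] Vn.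
    by split; [exact: NS | exact: N'T].
  by move=> S T ST [N NS]; exists N => n Nn Vn; apply: ST; exact: NS.
have [U [U_ultra FU]] := ultraFilterLemma F_proper.
exists U; split => //; last by apply: FU; exists 0%N.
by move=> S [N _ NS]; apply: FU; exists N => n Nn _; exact: NS.
Qed.

Theorem intersective_pattern {R : realType} {V : nat -> bool} {E : nat -> nat -> bool}
    {del del' : R} :
  infinitely_often V -> 0 <= del' -> del' < del ->
  (forall n, \forall M \near \oo, V M -> del <= dens (E n) M) ->
  exists2 om, often_dense del' om & forall L, infinitely_often (cylinder E om L).
Proof.
move=> V_inf del'_ge0 del'_lt E_dense.
have [U [U_ultra U_cofinite UV]] := ex_ultra_cofinite V_inf.
have E_denseU n : \forall M \near U, del <= dens (E n) M.
  exact: filter_app (U_cofinite _ (E_dense n)) UV.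
exists (omega U E del del' del'_lt) => [|L].
  exact: often_dense_omega.
exact: infinitely_often_cylinder_omega.
Qed.

Section triangular_submatrix.
Variable A : nat -> nat -> bool.

Lemma lower_triangular_injective {r c : nat -> nat} :
  (forall k l, A (r k) (c l) = (l <= k)%N) -> injective r /\ injective c.
Proof.
move=> pat; split=> [k1 k2 e | l1 l2 e]; apply/eqP; rewrite eqn_leq.
  have h l : (l <= k1)%N = (l <= k2)%N by rewrite -!pat e.
  by rewrite -h leqnn h leqnn.
have h k : (l1 <= k)%N = (l2 <= k)%N by rewrite -!pat e.
by rewrite h leqnn -h leqnn.
Qed.

Lemma fully_lower_triangular_of_patterns (om om' : nat -> bool) (row col : nat -> nat) :
  infinitely_often om' ->
  (forall m n, (n <= m)%N -> om n -> ~~ A n (col m)) ->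
  (forall q m, (m <= q)%N -> om' m -> A (row q) (col m) && om (row q)) ->
  has_fully_lower_triangular A.
Proof.
move=> om'_inf col_avoid row_hit.
have /choice[next next_spec] : forall b, exists m, (b <= m)%N && om' m.
  by move=> b; have [m bm om'_m] := om'_inf b; exists m; rewrite bm.
have [next_ge om'_next] : (forall b, b <= next b)%N /\ (forall b, om' (next b)).
  by split=> b; case/andP: (next_spec b).
(* The gap row (q k) < q k.+1 puts row (q k) among the rows avoided by
   col (q l) for every l > k. *)
pose q k := iter k (fun x => next (x.+1 + row x)%N) (next 0).
have qS k : q k.+1 = next ((q k).+1 + row (q k))%N by [].
have q_om' k : om' (q k) by case: k => [|k]; rewrite ?qS; apply: om'_next.
have row_lt k : (row (q k) < q k.+1)%N.
  by rewrite qS; apply: leq_trans (next_ge _); rewrite ltnS leq_addl.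
have q_mono : {homo q : k l / (k <= l)%N}.
  apply: (@homo_leq _ q (fun a b => (a <= b)%N)) => [//|k l m|k]; first exact: leq_trans.
  by rewrite qS; apply: leq_trans (next_ge _); rewrite addSn ltnW // ltnS leq_addr.
have pat k l : A (row (q k)) (col (q l)) = (l <= k)%N.
  have [lk|kl] := leqP l k; first by case/andP: (row_hit _ _ (q_mono _ _ lk) (q_om' l)).
  apply/negbTE/col_avoid; first exact: leq_trans (ltnW (row_lt k)) (q_mono _ _ kl).
  by case/andP: (row_hit _ _ (leqnn _) (q_om' k)).
have [r_inj c_inj] := lower_triangular_injective pat.
by exists (row \o q), (col \o q).
Qed.

Lemma avoiding_columns {R : realType} {g d : R} :
  0 <= d -> d < 1 - g -> (forall i, upper_density (rowseq A i) < g) ->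
  exists2 om, often_dense d om &
    exists col : nat -> nat, forall m n, (n <= m)%N -> om n -> ~~ A n (col m).
Proof.
move=> d_ge0 d_lt rows_sparse.
pose E n := predC (rowseq A n).
have E_dense n : \forall M \near \oo, predT M -> 1 - g <= dens (E n) M.
  near=> M => _; have M0 : (0 < M)%N by near: M; exact: nbhs_infty_gt.
  rewrite dens_predC // lerD2l lerN2; apply/ltW.
  by near: M; exact: upper_density_lt_near.
have [om om_dense cyl] :=
  intersective_pattern (fun b => ex_intro2 _ _ b (leqnn b) isT) d_ge0 d_lt E_dense.
exists om => //.
have /choice[col col_spec] : forall m, exists y, cylinder E om m.+1 y.
  by move=> m; have [y _ cyl_y] := cyl m.+1 0%N; exists y.
exists col => m n nm om_n.
by move/forallP/(_ (Ordinal (nm : (n < m.+1)%N)))/eqP: (col_spec m); rewrite om_n.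
Unshelve. all: end_near. Qed.

Lemma hitting_rows {R : realType} {om : nat -> bool} {col : nat -> nat} {d g : R} :
  0 < d + g - 1 -> often_dense d om -> (forall m, g < lower_density (colseq A (col m))) ->
  exists2 om', infinitely_often om' &
    exists row : nat -> nat,
      forall q m, (m <= q)%N -> om' m -> A (row q) (col m) && om (row q).
Proof.
move=> dg_gt0 om_dense cols_dense.
pose V K := d * K%:R <= (cnt om K)%:R.
have V_inf : infinitely_often V by move=> b; have [K bK dK] := om_dense b; exists K.
pose E m := predI (colseq A (col m)) om.
have E_dense m : \forall M \near \oo, V M -> d + g - 1 <= dens (E m) M.
  near=> M => d_om; have M0 : (0 < M)%N by near: M; exact: nbhs_infty_gt.
  apply: le_trans _ (dens_predI_ge _ _ _ M0).
  have : d <= dens om M by rewrite /dens ler_pdivlMr ?ltr0n.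
  have : g < dens (colseq A (col m)) M by near: M; exact: lower_density_gt_near.
  lra.
have half_gt0 : 0 < (d + g - 1) / 2 by rewrite divr_gt0.
have half_lt : (d + g - 1) / 2 < d + g - 1 by lra.
have [om' om'_dense cyl] := intersective_pattern V_inf (ltW half_gt0) half_lt E_dense.
exists om'; first exact: often_dense_infinitely_often half_gt0 om'_dense.
have /choice[row row_spec] : forall q, exists x, cylinder E om' q.+1 x.
  by move=> q; have [x _ cyl_x] := cyl q.+1 0%N; exists x.
exists row => q m mq om'_m.
by move/forallP/(_ (Ordinal (mq : (m < q.+1)%N)))/eqP: (row_spec q); rewrite om'_m.
Unshelve. all: end_near. Qed.

End triangular_submatrix.

Theorem theorem4p5 (R : realType) (A : nat -> nat -> bool) (alpha beta : R) :
  0 <= alpha -> alpha < beta -> beta <= 1 ->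
  (forall i : nat, upper_density (rowseq A i) <= alpha) ->
  (forall j : nat, lower_density (colseq A j) >= beta) ->
  has_fully_lower_triangular A.
Proof.
move=> alpha_ge0 alpha_lt beta_le1 rows_sparse cols_dense.
pose g := (2 * alpha + beta) / 3; pose g' := (alpha + 2 * beta) / 3.
pose d := 1 - (g + g') / 2.
have rows_lt i : upper_density (rowseq A i) < g.
  by apply: le_lt_trans (rows_sparse i) _; rewrite /g; lra.
have cols_gt j : g' < lower_density (colseq A j).
  by apply: lt_le_trans (cols_dense j); rewrite /g'; lra.
have d_ge0 : 0 <= d by rewrite /d /g /g'; lra.
have d_lt : d < 1 - g by rewrite /d /g /g'; lra.
have dg'_gt0 : 0 < d + g' - 1 by rewrite /d /g /g'; lra.
have [om om_dense [col col_avoid]] := avoiding_columns A d_ge0 d_lt rows_lt.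
have [om' om'_inf [row row_hit]] := hitting_rows A dg'_gt0 om_dense (fun m => cols_gt (col m)).
exact: fully_lower_triangular_of_patterns om'_inf col_avoid row_hit.
Qed.
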